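(* (a) Let $E=\bigcup_n E_n$ and $F=\bigcup_n F_n$ be locally convex direct limits of ascending sequences of Banach spaces $(E_n)$ and $(F_n)$ (with injective continuous linear bonding maps), and assume both sequences are compactly regular. Then $E\times F$ (with the product topology) is the locally convex direct limit $\bigcup_n(E_n\times F_n)$, and the sequence $(E_n\times F_n)_n$ is compactly regular. (b) Let $(E_n)_n$ and $(F_n)_n$ be ascending sequences of locally convex spaces with injective continuous linear bonding maps, with locally convex direct limits $E=\bigcup_n E_n$ and $F=\bigcup_n F_n$, and let $\tau_n\colon E_n\to F_n$ be topological embeddings (continuous linear) compatible with the bonding maps, inducing $\tau\colon E\to F$. Assume that for all $m,n\in\mathbb{N}$, every $x\in E_m$ with $\tau(x)\in F_n$ lies in $E_n$, and that $(F_n)_n$ is compactly regular. Then $(E_n)_n$ is compactly regular.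
   Context: An ascending sequence $(E_n)$ of locally convex spaces with injective continuous linear bonding maps and direct limit $E=\bigcup_n E_n$ is compactly regular if for every compact subset $C$ of $E$ there is $n\in\mathbb{N}$ such that $C\subseteq E_n$ and $C$ is compact in $E_n$. *)

From HB Require Import structures.
From mathcomp Require Import all_boot all_order all_algebra.
From mathcomp Require Import all_classical all_reals all_analysis.

Set Implicit Arguments.
Unset Strict Implicit.
Unset Printing Implicit Defensive.

Import Order.TTheory GRing.Theory Num.Theory.
Local Open Scope classical_set_scope.
Local Open Scope ring_scope.

(* Locally convex spaces are
   MathComp-Analysis [tvsType R] (topological vector spaces with a basis of
   convex sets); Banach spaces are [completeNormedModType R]. *)

Definition absolutely_convex (R : realType) (L : lmodType R) (U : set L) : Prop :=
  forall (x y : L) (s t : R), U x -> U y -> `|s| + `|t| <= 1 -> U (s *: x + t *: y).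

Definition ascending_seq (R : realType) (E : nat -> tvsType R)
    (b : forall n, E n -> E n.+1) : Prop :=
  forall n, linear (b n) /\ continuous (b n) /\ injective (b n).

(* L, together with the maps j n : E_n -> L, is the locally convex direct limit
   E = \bigcup_n E_n of the sequence (E_n, b):
   - algebraically: the j n are injective linear maps compatible with the
     bonding maps, whose images exhaust L (so L is the union of the E_n);
   - topologically: L carries the finest locally convex vector topology making
     all j n continuous, i.e. an absolutely convex U is a 0-neighbourhood in L
     iff each j n^-1(U) is a 0-neighbourhood in E_n. *)
Definition lc_direct_limit (R : realType) (E : nat -> tvsType R)
    (b : forall n, E n -> E n.+1) (L : tvsType R) (j : forall n, E n -> L) : Prop :=
  [/\ forall n, linear (j n) /\ injective (j n),
      forall n (x : E n), j n.+1 (b n x) = j n x,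
      forall x : L, exists n (y : E n), j n y = x &
      forall U : set L, absolutely_convex U ->
        (nbhs (0 : L) U <-> forall n, nbhs (0 : E n) (j n @^-1` U))].

Definition compactly_regular (R : realType) (E : nat -> tvsType R)
    (L : tvsType R) (j : forall n, E n -> L) : Prop :=
  forall C : set L, compact C ->
    exists n, C `<=` range (j n) /\ compact (j n @^-1` C).

Definition topological_embedding (U V : topologicalType) (f : U -> V) : Prop :=
  [/\ injective f, continuous f &
      forall (x : U) (A : set U), nbhs x A ->
        exists2 B : set V, nbhs (f x) B & f @^-1` B `<=` A].

Definition prod_bond (R : realType) (E F : nat -> tvsType R)
    (b : forall n, E n -> E n.+1) (c : forall n, F n -> F n.+1) :
    forall n, (E n * F n)%type -> (E n.+1 * F n.+1)%type :=
  fun n z => (b n z.1, c n z.2).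

Definition prod_inj (R : realType) (E F : nat -> tvsType R) (LE LF : tvsType R)
    (jE : forall n, E n -> LE) (jF : forall n, F n -> LF) :
    forall n, (E n * F n)%type -> (LE * LF)%type :=
  fun n z => (jE n z.1, jF n z.2).

From HB Require Import structures.
From mathcomp Require Import all_boot all_order all_algebra.
From mathcomp Require Import all_classical all_reals all_analysis.
Local Open Scope classical_set_scope.
Local Open Scope ring_scope.

Import Order.TTheory GRing.Theory Num.Theory.

Set Implicit Arguments.
Unset Strict Implicit.
Unset Printing Implicit Defensive.

(* (a): an absolutely convex U whose traces on the steps E_n x F_n are
   0-neighbourhoods has 0-neighbourhoods as slices U /\ (E x 0) and
   U /\ (0 x F); half of each spans a product neighbourhood inside U.  A
   compact C of E x F projects to compacts of E and F, both compact in a common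
   step n, and C is closed in E x F because E and F are Hausdorff: a vector in
   every 0-neighbourhood spans a compact set of multiples, which has to be
   bounded in a normed step, so the vector is 0.  Hence the trace of C on
   E_n x F_n is closed in a compact product.

   (b): the map tau induced by the embeddings tau_n is linear and continuous,
   so it sends a compact C of E to a compact of F, which by compact regularity
   of (F_n) sits compactly in some F_n.  The lifting hypothesis puts C inside
   E_n, and since tau_n is a topological embedding, compactness of tau_n(C) in
   F_n pulls back to compactness of C in E_n. *)

Section LinearFun.
Variables (R : realType) (E L : lmodType R) (f : E -> L).
Hypothesis lf : linear f.

Lemma linfD x y : f (x + y) = f x + f y.
Proof. by have := lf 1 x y; rewrite !scale1r. Qed.

Lemma linf0 : f 0 = 0.
Proof. by apply: (addrI (f 0)); rewrite addr0 -linfD addr0. Qed.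

Lemma linfZ a x : f (a *: x) = a *: f x.
Proof. by have := lf a x 0; rewrite !addr0 linf0 addr0. Qed.

End LinearFun.

Section AbsolutelyConvex.
Variables (R : realType) (E : lmodType R).

Lemma convex_set_conv (C : set E) (x y : E) (a : R) :
  convex_set C -> C x -> C y -> 0 <= a -> a <= 1 -> C (a *: x + (1 - a) *: y).
Proof.
move=> cC Cx Cy a0 a1.
exact/set_mem/(cC x y (Itv01 a0 a1) (mem_set Cx) (mem_set Cy)).
Qed.

Lemma convex_set_subconv (C : set E) (x y : E) (a c : R) :
  convex_set C -> C 0 -> C x -> C y -> 0 <= a -> 0 <= c -> a + c <= 1 ->
  C (a *: x + c *: y).
Proof.
move=> cC C0 Cx Cy a0 c0 ac1.
have [/eqP|acn0] := eqVneq (a + c) 0.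
  by rewrite paddr_eq0 // => /andP[/eqP -> /eqP ->]; rewrite !scale0r addr0.
have ac0 : 0 < a + c by rewrite lt_neqAle eq_sym acn0 addr_ge0.
have Cxy : C ((a / (a + c)) *: x + (1 - a / (a + c)) *: y).
  apply: convex_set_conv => //; first by rewrite divr_ge0 // ltW.
  by rewrite ler_pdivrMr // mul1r lerDl.
(* a x + c y = (a + c) ((a/(a+c)) x + (c/(a+c)) y) + (1 - (a + c)) 0 *)
have := convex_set_conv cC Cxy C0 (ltW ac0) ac1.
rewrite scaler0 addr0 scalerDr !scalerA mulrC divfK //.
suff -> : (a + c) * (1 - a / (a + c)) = c by [].
by rewrite mulrBr mulr1 mulrC divfK // addrC addKr.
Qed.

Lemma absolutely_convex_preimage (L : lmodType R) (f : E -> L) (U : set L) :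
  linear f -> absolutely_convex U -> absolutely_convex (f @^-1` U).
Proof.
by move=> lf aU x y s t Ux Uy st; rewrite /= lf (linfZ lf); exact: aU.
Qed.

End AbsolutelyConvex.

Lemma absolutely_convex_nbhs0 (R : realType) (E : tvsType R) (V : set E) :
  nbhs (0 : E) V ->
  exists U : set E, [/\ absolutely_convex U, nbhs (0 : E) U & U `<=` V].
Proof.
move=> nV.
have [B Bconv [Bopen Bbasis]] := @locally_convex R E.
have [C [BC C0] CV] := Bbasis 0 V nV.
have nC : nbhs (0 : E) C by apply: open_nbhs_nbhs; split => //; exact: Bopen.
have cC : convex_set C by apply: Bconv; exact: mem_set.
pose U := [set x : E | C x /\ C (- x)].
have UN z : U z -> U (- z) by move=> [Cz CNz]; split; rewrite ?opprK.
have Uabs s x : U x -> exists2 x', U x' & s *: x = `|s| *: x'.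
  move=> Ux; have [s0|s0] := leP 0 s; first by exists x; rewrite ?ger0_norm.
  by exists (- x); [exact: UN | rewrite ltr0_norm // scalerN scaleNr opprK].
exists U; split.
- move=> x y s t Ux Uy st.
  have [x' [Cx' CNx'] ->] := Uabs s x Ux.
  have [y' [Cy' CNy'] ->] := Uabs t y Uy.
  split; first exact: convex_set_subconv.
  by rewrite opprD -!scalerN; apply: convex_set_subconv.
- apply: filterI => //.
  by have := @opp_continuous E 0 C; rewrite oppr0 => /(_ nC).
- by move=> x [/CV].
Qed.

Lemma linear_continuous (R : realType) (E L : tvsType R) (f : E -> L) :
  linear f ->
  (forall U : set L, absolutely_convex U -> nbhs (0 : L) U ->
     nbhs (0 : E) (f @^-1` U)) ->
  continuous f.
Proof.
move=> lf hU x V nV.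
have nW : nbhs (0 : L) (+%R (- f x) @` V).
  by have := @nbhsB R L V (f x) (- f x) nV; rewrite addNr.
have [U [aU nU UW]] := absolutely_convex_nbhs0 nW.
apply: filterS (@nbhsT R E _ x (hU U aU nU)) => _ [u Uu <-] /=.
have [v Vv] := UW _ Uu; rewrite (linfD lf) => <-.
by rewrite addrA subrr add0r.
Qed.

Lemma compact_subset_nbhs (T : topologicalType) (x : T) (C : set T) :
  C x -> (forall B, nbhs x B -> C `<=` B) -> compact C.
Proof.
move=> Cx CB F PF FC; exists x; split => // A B FA nB.
have [c [Cc Ac]] := filter_ex (filterI FC FA).
by exists c; split => //; exact: CB.
Qed.

Lemma tvs_hausdorff (R : realType) (L : tvsType R) :
  (forall z : L, (forall U, nbhs (0 : L) U -> U z) -> z = 0) ->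
  hausdorff_space L.
Proof.
move=> hz p q cpq.
suff : q - p = 0 by move/eqP; rewrite subr_eq0 => /eqP.
apply: hz => U nU.
have := @sub_continuous L (0, 0) U; rewrite /= subr0 => /(_ nU).
case=> [[A B]] /= [nA nB] sAB.
have nAB : nbhs (0 : L) (A `&` B) by exact: filterI.
have [r [[w1 [Aw1 _] e1] [w2 [_ Bw2] e2]]] :=
  cpq _ _ (@nbhsT R L _ p nAB) (@nbhsT R L _ q nAB).
suff -> : q - p = w1 - w2 by exact: (sAB (w1, w2)).
have e : p + w1 = q + w2 by rewrite [LHS]e1 [RHS]e2.
by rewrite -(addrK w2 q) -e addrAC (addrC p) addrK.
Qed.

Lemma hausdorff_prod (T U : topologicalType) :
  hausdorff_space T -> hausdorff_space U -> hausdorff_space (T * U)%type.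
Proof.
move=> hT hU [p1 p2] [q1 q2] cpq; congr pair.
- apply: hT => A B nA nB.
  have [[r1 r2] [[Ar _] [Br _]]] : (A `*` @setT U) `&` (B `*` @setT U) !=set0.
    apply: cpq; [exists (A, setT) | exists (B, setT)] => //;
      by split => //; exact: filterT.
  by exists r1.
- apply: hU => A B nA nB.
  have [[r1 r2] [[_ Ar] [_ Br]]] : (@setT T `*` A) `&` (@setT T `*` B) !=set0.
    apply: cpq; [exists (setT, A) | exists (setT, B)] => //;
      by split => //; exact: filterT.
  by exists r2.
Qed.

Lemma compact_natmul_infinitesimal (R : realType) (L : tvsType R) (z : L) :
  (forall U, nbhs (0 : L) U -> U z) ->
  compact (range (fun k : nat => k%:R *: z)).
Proof.
move=> hz; apply: (@compact_subset_nbhs _ 0) => [|B nB _ [k _ <-]].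
  by exists 0%N => //; rewrite scale0r.
have [->|k0] := eqVneq k 0%N; first by rewrite scale0r; exact: nbhs_singleton.
have kn0 : (k%:R : R) != 0 by rewrite pnatr_eq0.
have [b Bb <-] := hz _ (nbhs0Z (invr_neq0 kn0) nB).
by rewrite scalerA divff // scale1r.
Qed.

Lemma compactly_regular_hausdorff (R : realType) (E : nat -> normedModType R)
    (L : tvsType R) (j : forall n, E n -> L) :
  (forall n, linear (j n)) ->
  @compactly_regular R (fun n => E n : tvsType R) L j -> hausdorff_space L.
Proof.
move=> jl cr; apply: tvs_hausdorff => z hz.
have [n [Cr /compact_bounded Cb]] := cr _ (compact_natmul_infinitesimal hz).
have [w _ wz] := Cr z (ex_intro2 _ _ 1%N I (scale1r z)).
have [M M0 hM] := pinfty_ex_gt0 Cb.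
have kwM (k : nat) : `|k%:R *: w| <= M.
  by apply: hM; exists k => //; rewrite (linfZ (jl n)) wz.
have [w0|wn0] := eqVneq w 0; first by rewrite -wz w0 (linf0 (jl n)).
have wp : 0 < `|w| by rewrite normr_gt0.
have := kwM (Num.bound (M / `|w|)).
rewrite normrZ normr_nat -ler_pdivlMr //.
by move/(lt_le_trans (archi_boundP (ltW (divr_gt0 M0 wp)))); rewrite ltxx.
Qed.

Section DirectLimit.
(* Otherwise the index n of the section variable j : forall n, E n -> L
   would become implicit. *)
Unset Implicit Arguments.
Variables (R : realType) (E : nat -> tvsType R) (b : forall n, E n -> E n.+1).
Variables (L : tvsType R) (j : forall n, E n -> L).
Hypothesis hb : ascending_seq b.
Hypothesis hj : lc_direct_limit b j.
Set Implicit Arguments.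

Lemma dl_linear (n : nat) : linear (j n).
Proof. by case: hj => /(_ n) []. Qed.

Lemma dl_inj (n : nat) : injective (j n).
Proof. by case: hj => /(_ n) []. Qed.

Lemma dl_bond n (x : E n) : j n.+1 (b n x) = j n x.
Proof. by case: hj => _ h _ _; exact: h. Qed.

Lemma dl_exhaustive (x : L) : exists n (y : E n), j n y = x.
Proof. by case: hj => _ _ h _; exact: h. Qed.

Lemma dl_nbhs0 (U : set L) : absolutely_convex U ->
  nbhs (0 : L) U <-> forall n, nbhs (0 : E n) (j n @^-1` U).
Proof. by case: hj => _ _ _ h; exact: h. Qed.

Lemma dl_continuous (n : nat) : continuous (j n).
Proof.
apply: linear_continuous; first exact: dl_linear.
by move=> U aU /(dl_nbhs0 aU); apply.
Qed.

Fixpoint bond_iter (n d : nat) : E n -> E (d + n) :=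
  match d return E n -> E (d + n) with
  | 0 => id
  | d'.+1 => fun x => b (d' + n) (bond_iter d' x)
  end.

Lemma dl_bond_iter n d (x : E n) : j (d + n) (bond_iter d x) = j n x.
Proof. by elim: d => [//|d IH] /=; rewrite dl_bond. Qed.

Lemma bond_iter_continuous n d : continuous (bond_iter (n := n) d).
Proof.
elim: d => [|d IH] x /=; first by [].
have [_ [bc _]] := hb (d + n).
exact: (continuous_comp (IH x) (bc (bond_iter d x))).
Qed.

Lemma dl_lift n k (x : E n) : (n <= k)%N -> exists y : E k, j k y = j n x.
Proof.
move=> nk; rewrite -(subnK nk).
by exists (bond_iter (k - n) x); exact: dl_bond_iter.
Qed.

Lemma dl_common (x y : L) : exists k (u v : E k), j k u = x /\ j k v = y.
Proof.
have [n [u <-]] := dl_exhaustive x; have [m [v <-]] := dl_exhaustive y.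
have [u' hu] := dl_lift u (leq_maxl n m).
have [v' hv] := dl_lift v (leq_maxr n m).
by exists (maxn n m), u', v'.
Qed.

Definition compact_in_step (C : set L) n :=
  C `<=` range (j n) /\ compact (j n @^-1` C).

Lemma compact_in_step_mono (C : set L) n k :
  (n <= k)%N -> compact_in_step C n -> compact_in_step C k.
Proof.
move=> nk; rewrite -(subnK nk); move: (k - n)%N => d {nk} [Cr Cc]; split.
  by move=> c /Cr [y _ <-]; exists (bond_iter d y) => //; exact: dl_bond_iter.
have -> : j (d + n) @^-1` C = bond_iter d @` (j n @^-1` C).
  apply/seteqP; split; last by move=> _ [y Cy <-]; rewrite /= dl_bond_iter.
  move=> z /= Cz; have [y _ yz] := Cr _ Cz.
  by exists y; [rewrite /= yz | apply: dl_inj; rewrite dl_bond_iter].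
apply: continuous_compact => //.
exact/continuous_subspaceT/bond_iter_continuous.
Qed.

End DirectLimit.

Arguments dl_linear {R E b L j} hj n.
Arguments dl_inj {R E b L j} hj n.
Arguments dl_continuous {R E b L j} hj n.

Lemma embedding_compact (U V : topologicalType) (f : U -> V) (D : set U) :
  topological_embedding f -> compact (f @` D) -> compact D.
Proof.
case=> _ _ emb cfD F PF FD.
have FfD : (f @ F) (f @` D) by apply: (@filterS _ _ _ D) => // x Dx; exists x.
have [_ [[x Dx <-] clx]] := cfD _ (fmap_proper_filter f PF) FfD.
exists x; split => // A B FA nB.
have [B' nB' sB'] := emb x B nB.
have FfA : (f @ F) (f @` A) by apply: (@filterS _ _ _ A) => // a Aa; exists a.
have [_ [[a Aa <-] B'a]] := clx _ _ FfA nB'.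
by exists a; split => //; exact: sB'.
Qed.

Section InducedMap.
Unset Implicit Arguments.
Variables (R : realType) (E F : nat -> tvsType R).
Variables (b : forall n, E n -> E n.+1) (c : forall n, F n -> F n.+1).
Variables (LE LF : tvsType R).
Variables (jE : forall n, E n -> LE) (jF : forall n, F n -> LF).
Variables (tau_ : forall n, E n -> F n) (tau : LE -> LF).
Hypothesis hjE : lc_direct_limit b jE.
Hypothesis hjF : lc_direct_limit c jF.
Hypothesis tau_linear : forall n, linear (tau_ n).
Hypothesis tau_embedding : forall n, topological_embedding (tau_ n).
Hypothesis tau_compat : forall n (x : E n), tau (jE n x) = jF n (tau_ n x).
Set Implicit Arguments.

Lemma induced_linear : linear tau.
Proof.
move=> a x y; have [k [u [v [<- <-]]]] := dl_common hjE x y.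
rewrite -(linfZ (dl_linear hjE k)) -(linfD (dl_linear hjE k)) !tau_compat.
by rewrite tau_linear (linfD (dl_linear hjF k)) (linfZ (dl_linear hjF k)).
Qed.

Lemma induced_continuous : continuous tau.
Proof.
apply: linear_continuous; first exact: induced_linear.
move=> U aU nU.
have aU' := absolutely_convex_preimage induced_linear aU.
apply/(dl_nbhs0 hjE aU') => n.
have := proj1 (dl_nbhs0 hjF aU) nU n.
have [_ tau_continuous _] := tau_embedding n.
rewrite -(linf0 (tau_linear n)) => /tau_continuous.
apply: (@filterS _ _ _ (tau_ n @^-1` (jF n @^-1` U))) => x /=.
by rewrite tau_compat.
Qed.

Lemma compactly_regular_embedded :
  (forall m n (x : E m), (exists y : F n, jF n y = tau (jE m x)) ->
     exists z : E n, jE n z = jE m x) ->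
  compactly_regular jF -> compactly_regular jE.
Proof.
move=> tau_reflect crF C cC.
have cK := continuous_compact (continuous_subspaceT induced_continuous) cC.
have [n [Kr Kc]] := crF _ cK.
have Cr : C `<=` range (jE n).
  move=> x Cx; have [m [y yx]] := dl_exhaustive hjE x.
  have [y' _ y'x] := Kr (tau x) (ex_intro2 _ _ x Cx erefl).
  have [|z zy] := tau_reflect m n y; first by exists y'; rewrite yx.
  by exists z; rewrite ?zy.
exists n; split => //; apply: (embedding_compact (tau_embedding n)).
suff -> : tau_ n @` (jE n @^-1` C) = jF n @^-1` (tau @` C) by [].
apply/seteqP; split.
  by move=> _ [z Cz <-]; exists (jE n z); rewrite ?tau_compat.
move=> y [x Cx xy]; have [z _ zx] := Cr x Cx.
exists z; first by rewrite /= zx.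
by apply: (dl_inj hjF n); rewrite -tau_compat zx.
Qed.

End InducedMap.

Section ProductSlices.
Variables (R : realType) (X Y : tvsType R).

Lemma nbhs0_slicel (V : set (X * Y)) :
  nbhs (0 : X * Y) V -> nbhs (0 : X) [set x | V (x, 0)].
Proof. exact: (cvg_pair cvg_id (cvg_cst (0 : Y))). Qed.

Lemma nbhs0_slicer (V : set (X * Y)) :
  nbhs (0 : X * Y) V -> nbhs (0 : Y) [set y | V (0, y)].
Proof. exact: (cvg_pair (cvg_cst (0 : X)) cvg_id). Qed.

Lemma absolutely_convex_slicel (U : set (X * Y)) :
  absolutely_convex U -> absolutely_convex [set x | U (x, 0)].
Proof.
apply: (absolutely_convex_preimage (f := fun x : X => (x, 0 : Y))).
move=> a x y; change ((a *: x + y, 0 : Y) = (a *: x + y, a *: (0 : Y) + 0)).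
by rewrite scaler0 addr0.
Qed.

Lemma absolutely_convex_slicer (U : set (X * Y)) :
  absolutely_convex U -> absolutely_convex [set y | U (0, y)].
Proof.
apply: (absolutely_convex_preimage (f := fun y : Y => (0 : X, y))).
move=> a x y; change ((0 : X, a *: x + y) = (a *: (0 : X) + 0, a *: x + y)).
by rewrite scaler0 addr0.
Qed.

(* (x/2, y/2) = (x, 0)/2 + (0, y)/2 lies in U when (x, 0) and (0, y) do. *)
Lemma nbhs0_of_slices (U : set (X * Y)) : absolutely_convex U ->
  nbhs (0 : X) [set x | U (x, 0)] -> nbhs (0 : Y) [set y | U (0, y)] ->
  nbhs (0 : X * Y) U.
Proof.
move=> aU nUX nUY.
have h2 : (2^-1 : R) != 0 by rewrite invr_eq0 pnatr_eq0.
exists ( *:%R (2^-1 : R) @` [set x | U (x, 0)],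
         *:%R (2^-1 : R) @` [set y | U (0, y)]).
  by split; exact: nbhs0Z.
case=> _ _ /= [[x Ux <-] [y Uy <-]].
have n2 : `|2^-1 : R| + `|2^-1 : R| <= 1.
  by rewrite ger0_norm ?invr_ge0 // [X in _ <= X](splitr 1) mul1r.
have := aU _ _ _ _ Ux Uy n2.
congr U; congr pair; rewrite /= scaler0 ?addr0 ?add0r //.
Qed.

End ProductSlices.

Section ProductLimit.
Unset Implicit Arguments.
Variables (R : realType) (E F : nat -> tvsType R).
Variables (b : forall n, E n -> E n.+1) (c : forall n, F n -> F n.+1).
Variables (LE LF : tvsType R).
Variables (jE : forall n, E n -> LE) (jF : forall n, F n -> LF).
Hypothesis hb : ascending_seq b.
Hypothesis hc : ascending_seq c.
Hypothesis hjE : lc_direct_limit b jE.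
Hypothesis hjF : lc_direct_limit c jF.
Set Implicit Arguments.

Local Notation EF n := ((E n * F n)%type : tvsType R).
Local Notation pi n := (@prod_inj R E F LE LF jE jF n).

Lemma prod_inj_linear n : linear (pi n).
Proof.
move=> a [x1 y1] [x2 y2].
by congr pair; [exact: (dl_linear hjE n) | exact: (dl_linear hjF n)].
Qed.

Lemma prod_inj_continuous n : continuous (pi n).
Proof.
move=> z; apply: cvg_pair; apply: continuous_comp.
- exact: cvg_fst.
- exact: (dl_continuous hjE n).
- exact: cvg_snd.
- exact: (dl_continuous hjF n).
Qed.

Lemma prod_lc_direct_limit :
  @lc_direct_limit R (fun n => EF n) (prod_bond b c) (LE * LF)%type
    (prod_inj jE jF).
Proof.
split.
- move=> n; split; first exact: prod_inj_linear.
  by move=> [x1 y1] [x2 y2] [/(dl_inj hjE n) -> /(dl_inj hjF n) ->].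
- by move=> n [x y]; rewrite /prod_inj /= !dl_bond.
- move=> [x y].
  have [n [u <-]] := dl_exhaustive hjE x.
  have [m [v <-]] := dl_exhaustive hjF y.
  have [u' hu] := dl_lift hjE u (leq_maxl n m).
  have [v' hv] := dl_lift hjF v (leq_maxr n m).
  by exists (maxn n m), (u', v'); rewrite /prod_inj /= hu hv.
- move=> U aU; split => [nU n|nU].
    rewrite -(linf0 (prod_inj_linear (n := n))) in nU.
    exact: prod_inj_continuous.
  apply: nbhs0_of_slices => //.
  + apply/(dl_nbhs0 hjE (absolutely_convex_slicel aU)) => n.
    apply: filterS (nbhs0_slicel (nU n)) => x /=.
    by rewrite /prod_inj /= (linf0 (dl_linear hjF n)).
  + apply/(dl_nbhs0 hjF (absolutely_convex_slicer aU)) => n.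
    apply: filterS (nbhs0_slicer (nU n)) => y /=.
    by rewrite /prod_inj /= (linf0 (dl_linear hjE n)).
Qed.

Lemma prod_compactly_regular :
  hausdorff_space LE -> hausdorff_space LF ->
  compactly_regular jE -> compactly_regular jF ->
  @compactly_regular R (fun n => EF n) (LE * LF)%type (prod_inj jE jF).
Proof.
move=> hE hF crE crF C cC.
have fst_cont : continuous (@fst LE LF) by move=> ?; exact: cvg_fst.
have snd_cont : continuous (@snd LE LF) by move=> ?; exact: cvg_snd.
have [n1 C1n1] := crE _ (continuous_compact (continuous_subspaceT fst_cont) cC).
have [n2 C2n2] := crF _ (continuous_compact (continuous_subspaceT snd_cont) cC).
pose n := maxn n1 n2.
have [C1r C1c] := compact_in_step_mono hb hjE (leq_maxl n1 n2) C1n1.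
have [C2r C2c] := compact_in_step_mono hc hjF (leq_maxr n1 n2) C2n2.
exists n; split.
  move=> [x y] Cxy.
  have [u _ ux] := C1r x (ex_intro2 _ _ (x, y) Cxy erefl).
  have [v _ vy] := C2r y (ex_intro2 _ _ (x, y) Cxy erefl).
  by exists (u, v) => //; rewrite /prod_inj /= ux vy.
apply: (subclosed_compact _ (compact_setX C1c C2c)).
  apply: preimage_closed; first by move=> z _; exact: prod_inj_continuous.
  exact: compact_closed (hausdorff_prod hE hF) cC.
by move=> [u v] /= Cuv; split; exists (jE n u, jF n v).
Qed.

End ProductLimit.

Theorem lemma4p7 :
  (* (a) *)
  (forall (R : realType) (E F : nat -> completeNormedModType R)
      (b : forall n, E n -> E n.+1) (c : forall n, F n -> F n.+1)
      (LE LF : tvsType R)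
      (jE : forall n, E n -> LE) (jF : forall n, F n -> LF),
    @ascending_seq R (fun n => E n : tvsType R) b ->
    @ascending_seq R (fun n => F n : tvsType R) c ->
    @lc_direct_limit R (fun n => E n : tvsType R) b LE jE ->
    @lc_direct_limit R (fun n => F n : tvsType R) c LF jF ->
    @compactly_regular R (fun n => E n : tvsType R) LE jE ->
    @compactly_regular R (fun n => F n : tvsType R) LF jF ->
    @lc_direct_limit R (fun n => (E n * F n)%type : tvsType R)
      (@prod_bond R (fun n => E n : tvsType R) (fun n => F n : tvsType R) b c)
      (LE * LF)%type
      (@prod_inj R (fun n => E n : tvsType R) (fun n => F n : tvsType R) LE LF jE jF) /\
    @compactly_regular R (fun n => (E n * F n)%type : tvsType R)
      (LE * LF)%type
      (@prod_inj R (fun n => E n : tvsType R) (fun n => F n : tvsType R) LE LF jE jF)) /\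
  (* (b) *)
  (forall (R : realType) (E F : nat -> tvsType R)
      (b : forall n, E n -> E n.+1) (c : forall n, F n -> F n.+1)
      (LE LF : tvsType R)
      (jE : forall n, E n -> LE) (jF : forall n, F n -> LF)
      (tau_ : forall n, E n -> F n) (tau : LE -> LF),
    @ascending_seq R E b -> @ascending_seq R F c ->
    @lc_direct_limit R E b LE jE -> @lc_direct_limit R F c LF jF ->
    (forall n, linear (tau_ n) /\ topological_embedding (tau_ n)) ->
    (forall n (x : E n), tau_ n.+1 (b n x) = c n (tau_ n x)) ->
    (forall n (x : E n), tau (jE n x) = jF n (tau_ n x)) ->
    (forall m n (x : E m), (exists y : F n, jF n y = tau (jE m x)) ->
       exists z : E n, jE n z = jE m x) ->
    @compactly_regular R F LF jF ->
    @compactly_regular R E LE jE).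
Proof.
split.
- move=> R E F b c LE LF jE jF hb hc hjE hjF crE crF.
  have hE := compactly_regular_hausdorff (dl_linear hjE) crE.
  have hF := compactly_regular_hausdorff (dl_linear hjF) crF.
  split; first exact: prod_lc_direct_limit.
  exact: prod_compactly_regular.
- move=> R E F b c LE LF jE jF tau_ tau _ _ hjE hjF htau _ tau_compat.
  apply: compactly_regular_embedded hjE hjF _ _ tau_compat.
  + by move=> n; case: (htau n).
  + by move=> n; case: (htau n).
Qed.
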